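(* Let $k,n\in\mathbb N$ and $U\subset\mathrm{Sym}_n$. Let $\mathcal O(U)$ be the set of orbits of $\langle U\rangle$ on $\{1,\dots,n\}$. Then the number of involutions $\pi\in\mathrm{Sym}_n$ such that - $\pi$ commutes with every element of $U$, and - the induced action of $\pi$ on $\mathcal O(U)$ has exactly $k$ orbits of size $2$ is at most $2^n\,|\mathrm{Inv}_{|\mathcal O(U)|,k}|$.
   Context: Involutions here include the identity, i.e. all $\pi$ with $\pi^2=1$. A permutation commuting with $\langle U\rangle$ permutes the $\langle U\rangle$-orbits. $\mathrm{Inv}_{N,k}$ is the set of $\sigma\in\mathrm{Sym}_N$ with $\sigma^2=1$ and exactly $N-2k$ fixed points, i.e. with exactly $k$ two-cycles. *)

From mathcomp Require Import all_boot all_order all_fingroup.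
Set Implicit Arguments. Unset Strict Implicit. Unset Printing Implicit Defensive.
Local Open Scope group_scope.

Definition orbitsU (n : nat) (U : {set 'S_n}) : {set {set 'I_n}} :=
  orbit 'P <<U>> @: [set: 'I_n].

(* The set of orbits of size 2 of the action of <pi> on O(U), where pi acts
   on orbits by O |-> pi @: O (well defined when pi commutes with U). *)
Definition induced_two_orbits (n : nat) (U : {set 'S_n}) (p : 'S_n)
  : {set {set {set 'I_n}}} :=
  [set [set O; p @: O] | O : {set 'I_n} in orbitsU U & p @: O != O].

(* Inv_{N,k}: involutions of Sym_N with exactly k two-cycles,
   i.e. exactly 2k moved points. *)
Definition Inv (N k : nat) : {set 'S_N} :=
  [set s : 'S_N | (s * s == 1) && (#|[set x | s x != x]| == 2 * k)%N].

Definition good_invs (n k : nat) (U : {set 'S_n}) : {set 'S_n} :=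
  [set p : 'S_n | [&& p * p == 1,
                     [forall u in U, p * u == u * p] &
                     #|induced_two_orbits U p| == k]].

From mathcomp Require Import all_boot all_order all_fingroup.
Set Implicit Arguments. Unset Strict Implicit. Unset Printing Implicit Defensive.
Local Open Scope group_scope.

(* A permutation p commuting with <<U>> permutes the <<U>>-orbits, and it is
   determined by this induced permutation together with the image p(R) of a
   set R of orbit representatives: p r is the only point of p(R) in the orbit
   p(orbit of r), and p (g r) = g (p r) for g in <<U>>.  For a good involution the
   induced permutation is an involution of the N orbits moving exactly 2k of
   them, i.e. a member of Inv_{N,k}, while p(R) is one of 2^n subsets. *)

Section OrdPerm.
Variables (T : finType) (X : {set T}) (f : T -> T).

Definition ord_fun (i : 'I_#|X|) : 'I_#|X| :=
  enum_rank_in (enum_valP i) (f (enum_val i)).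

(* The identity when [f] does not permute [X]. *)
Definition ord_perm : 'S_#|X| := insubd (1 : 'S_#|X|) [ffun i => ord_fun i].

Hypotheses (fX : {in X, forall x, f x \in X}) (f_inj : {in X &, injective f}).

Lemma ord_permE : ord_perm =1 ord_fun.
Proof.
have inj_f : injectiveb [ffun i => ord_fun i].
  apply/injectiveP => i j; rewrite !ffunE => /(congr1 enum_val).
  rewrite !enum_rankK_in ?fX ?enum_valP // => /f_inj.
  by move=> /(_ (enum_valP i) (enum_valP j)) /enum_val_inj.
by move=> i; rewrite /ord_perm -pvalE insubdK // ffunE.
Qed.

Lemma enum_val_ord_perm i : enum_val (ord_perm i) = f (enum_val i).
Proof. by rewrite ord_permE enum_rankK_in ?fX ?enum_valP. Qed.

Lemma card_moved_ord_perm :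
  #|[set i | ord_perm i != i]| = #|[set x in X | f x != x]|.
Proof.
rewrite -(card_imset _ (@enum_val_inj _ (mem X))); apply: eq_card => x.
apply/imsetP/idP => [[i + ->] | ].
  by rewrite !inE -(inj_eq enum_val_inj) enum_val_ord_perm enum_valP.
rewrite inE => /andP [Xx fx_x]; exists (enum_rank_in Xx x).
  by rewrite inE -(inj_eq enum_val_inj) enum_val_ord_perm enum_rankK_in.
by rewrite enum_rankK_in.
Qed.

Lemma ord_perm_invol : {in X, cancel f f} -> ord_perm * ord_perm = 1.
Proof.
move=> fK; apply/permP => i; rewrite permM perm1; apply: enum_val_inj.
by rewrite !enum_val_ord_perm fK ?enum_valP.
Qed.

End OrdPerm.

Lemma ord_perm_eq_in (T : finType) (X : {set T}) (f g : T -> T) :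
    {in X, forall x, f x \in X} -> {in X &, injective f} ->
    {in X, forall x, g x \in X} -> {in X &, injective g} ->
  ord_perm X f = ord_perm X g -> {in X, f =1 g}.
Proof.
move=> fX f_inj gX g_inj fg x Xx.
have := congr1 (fun s : 'S_#|X| => enum_val (s (enum_rank_in Xx x))) fg.
by rewrite /= !enum_val_ord_perm // enum_rankK_in.
Qed.

Lemma card_moved_involution (T : finType) (X : {set T}) (f : T -> T) :
    {in X, forall x, f x \in X} -> {in X, cancel f f} ->
  #|[set x in X | f x != x]| = (2 * #|[set [set x; f x] | x in X & f x != x]|)%N.
Proof.
move=> fX fK; set M := [set x in X | f x != x]; set P := [set _ | x in _ & _].
have pair_fK x y : y \in [set x; f x] -> x \in X -> [set x; f x] = [set y; f y].
  by rewrite !inE => /orP [] /eqP -> // Xx; rewrite fK // setUC.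
have partP : partition P M.
  apply/and3P; split.
  - apply/eqP/setP => y; apply/bigcupP/idP => [[_ /imsetP [x + ->]] | My].
      rewrite !inE => /andP [Xx fx_x] /orP [] /eqP ->; first by rewrite Xx.
      by rewrite fX // fK // eq_sym.
    by exists [set y; f y]; [apply: imset_f | rewrite !inE eqxx].
  - apply/trivIsetP => _ _ /imsetP [x + ->] /imsetP [y + ->].
    rewrite !inE => /andP [Xx _] /andP [Xy _].
    apply: contraNT => /pred0Pn [z /= /andP [/pair_fK -> // /pair_fK -> //]].
  - by apply/imsetP => [[x _ /setP /(_ x)]]; rewrite !inE eqxx.
rewrite (@card_uniform_partition _ 2 _ _ _ partP) 1?mulnC // => _ /imsetP [x + ->].
by rewrite inE => /andP [_ fx_x]; rewrite cards2 eq_sym fx_x.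
Qed.

Section Centraliser.
Variables (T : finType) (G : {group {perm T}}).

Lemma cent_permE p g x : p \in 'C(G) -> g \in G -> p (g x) = g (p x).
Proof. by move=> /centP cGp Gg; rewrite -!permM (cGp g Gg). Qed.

Lemma cent_imset_orbit p x : p \in 'C(G) -> p @: orbit 'P G x = orbit 'P G (p x).
Proof.
move=> cGp; apply/setP => y; apply/imsetP/orbitP => [[_ /orbitP [g Gg <-] ->] | ].
  by exists g; rewrite // /= /aperm (cent_permE _ cGp Gg).
case=> g Gg <-; exists (g x); first exact: mem_orbit.
by rewrite /= /aperm (cent_permE _ cGp Gg).
Qed.

Lemma eq_cent_perm p q : p \in 'C(G) -> q \in 'C(G) ->
    (forall x, orbit 'P G (p x) = orbit 'P G (q x)) ->
    p @: orbit_transversal 'P G setT = q @: orbit_transversal 'P G setT ->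
  p = q.
Proof.
move=> cGp cGq pq_orbit pqR; set R := orbit_transversal _ _ _ in pqR.
have actsT : [acts G, on setT | 'P] by apply/actsP => a _ y; rewrite !inE.
have [_ _ R_uniq R_meets] := orbit_transversalP actsT.
have pq_R r : r \in R -> p r = q r.
  move=> Rr; have /imsetP [r' Rr' pr_qr'] : p r \in q @: R by rewrite -pqR imset_f.
  rewrite pr_qr'; congr (q _); apply/eqP; rewrite -R_uniq //.
  have -> : orbit 'P G r' = orbit 'P G r.
    by apply: (imset_inj (@perm_inj _ q)); rewrite !cent_imset_orbit // -pr_qr'.
  exact: orbit_refl.
apply/permP => x; have [a Ga Rxa] := R_meets x (in_setT x).
by rewrite -(permK a x) !(cent_permE _ _ (groupVr Ga)) // pq_R.
Qed.

End Centraliser.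

Lemma imset_perm_involutive (T : finType) (p : {perm T}) :
  p * p = 1 -> involutive (fun A : {set T} => p @: A).
Proof.
move=> pp A; rewrite -imset_comp -[RHS]imset_id; apply: eq_imset => x /=.
by rewrite -permM pp perm1.
Qed.

Section OrbitsU.
Variables (n : nat) (U : {set 'S_n}).

Lemma cent_gen_commute p : [forall u in U, p * u == u * p] -> p \in 'C(<<U>>).
Proof. by move=> /forall_inP pU; rewrite cent_gen; apply/centP => u /pU /eqP. Qed.

Lemma imset_orbitsU p : p \in 'C(<<U>>) ->
  {in orbitsU U, forall O : {set 'I_n}, p @: O \in orbitsU U}.
Proof. by move=> cUp _ /imsetP [x _ ->]; rewrite cent_imset_orbit // imset_f. Qed.

Lemma imset_perm_inj_in (p : 'S_n) :
  {in orbitsU U &, injective (fun O : {set 'I_n} => p @: O)}.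
Proof. by move=> A B _ _; apply: (imset_inj (@perm_inj _ p)). Qed.

Definition orbits_perm (p : 'S_n) : 'S_#|orbitsU U| :=
  ord_perm (orbitsU U) (fun O => p @: O).

Lemma orbits_perm_Inv k p : p \in good_invs k U -> orbits_perm p \in Inv #|orbitsU U| k.
Proof.
rewrite inE => /and3P [/eqP pp /cent_gen_commute cUp /eqP pk].
have pX := imset_orbitsU cUp.
have pK : {in orbitsU U, cancel (fun O : {set 'I_n} => p @: O) (fun O => p @: O)}.
  exact: in1W (imset_perm_involutive pp).
have p_inj := @imset_perm_inj_in p.
rewrite inE (ord_perm_invol pX p_inj pK) eqxx /= card_moved_ord_perm //.
by rewrite (card_moved_involution pX pK) -pk.
Qed.

Lemma orbits_perm_orbit p q : p \in 'C(<<U>>) -> q \in 'C(<<U>>) ->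
  orbits_perm p = orbits_perm q -> forall x, orbit 'P <<U>> (p x) = orbit 'P <<U>> (q x).
Proof.
move=> cUp cUq; move/(ord_perm_eq_in (imset_orbitsU cUp) (@imset_perm_inj_in p)).
move/(_ (imset_orbitsU cUq) (@imset_perm_inj_in q)) => pq x.
by rewrite -!cent_imset_orbit // pq // imset_f.
Qed.

End OrbitsU.

Theorem lemma3p1 (k n : nat) (U : {set 'S_n}) :
  (#|good_invs k U| <= 2 ^ n * #|Inv #|orbitsU U| k|)%N.
Proof.
pose F p := (orbits_perm U p, p @: orbit_transversal 'P <<U>> setT).
have F_inj : {in good_invs k U &, injective F}.
  move=> p q; rewrite !inE => /and3P [_ /cent_gen_commute cUp _].
  move=> /and3P [_ /cent_gen_commute cUq _] [pq_orbits pq_R].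
  exact: eq_cent_perm cUp cUq (orbits_perm_orbit cUp cUq pq_orbits) pq_R.
rewrite -(card_in_imset F_inj) mulnC -[n in (2 ^ n)%N]card_ord -cardsT.
rewrite -card_powerset -cardsX; apply/subset_leq_card/subsetP => _ /imsetP [p p_good ->].
by rewrite inE /= orbits_perm_Inv // powersetE subsetT.
Qed.
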